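(* For every $k\ge 1$, the bi-hypergraph obtained from $\mathcal H_{2k}$ by adding a new vertex $v$ and the edges $\{v,v_{1,j},v_{2k,j+1}\}$ for all $j\in[3]$ is minimal uncolorable.
   Context: A bi-hypergraph $\mathcal H=(V,E)$ consists of a finite vertex set $V$ and a set $E$ of subsets of $V$, called edges, with no edge contained in another. A mapping $f:V\to\mathbb N$ is a proper coloring of $\mathcal H$ if $1<|f(e)|<|e|$ for every $e\in E$, where $f(e)=\{f(v):v\in e\}$. $\mathcal H$ is colorable if it has a proper coloring, and uncolorable otherwise. A subhypergraph of $\mathcal H$ is a bi-hypergraph $(V',E')$ with $V'\subseteq V$, $E'\subseteq E$; $\mathcal H$ is minimal uncolorable if it is uncolorable but every proper subhypergraph of it is colorable. For $k\ge 2$, $\mathcal H_k$ is the $3$-uniform bi-hypergraph with vertex set $\{v_{i,j}: i\in[k], j\in[3]\}$ (all distinct), with the convention $v_{i,4}=v_{i,1}$, $v_{i,5}=v_{i,2}$, whose edges are the sets $\{v_{i,1},v_{i,2},v_{i,3}\}$ for all $i\in[k]$ and the sets $\{v_{q+1,j},v_{q,j},v_{q,j+t}\}$ for all $q\in[k-1]$, $j\in[3]$, $t\in\{1,2\}$. *)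

From mathcomp Require Import all_boot.
Set Implicit Arguments. Unset Strict Implicit. Unset Printing Implicit Defensive.

Section BiHypergraph.
Variable T : finType.

Definition ncolors (f : T -> nat) (e : {set T}) : nat :=
  size (undup [seq f x | x <- enum e]).

Definition bihypergraph (Vs : {set T}) (Es : {set {set T}}) : Prop :=
  (forall e, e \in Es -> e \subset Vs) /\
  (forall e1 e2, e1 \in Es -> e2 \in Es -> e1 \subset e2 -> e1 = e2).

Definition proper_coloring (Es : {set {set T}}) (f : T -> nat) : Prop :=
  forall e, e \in Es -> 1 < ncolors f e < #|e|.

(* a coloring of (Vs,Es) is a map Vs -> nat; we use maps T -> nat, whose
   values outside Vs are irrelevant *)
Definition colorable (Vs : {set T}) (Es : {set {set T}}) : Prop :=
  exists f : T -> nat, proper_coloring Es f.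

Definition minimal_uncolorable (Vs : {set T}) (Es : {set {set T}}) : Prop :=
  ~ colorable Vs Es /\
  forall (Vs' : {set T}) (Es' : {set {set T}}),
    bihypergraph Vs' Es' -> Vs' \subset Vs -> Es' \subset Es ->
    (Vs', Es') <> (Vs, Es) -> colorable Vs' Es'.

End BiHypergraph.

(* Vertex type for H_n plus an extra vertex v = None;
   Some (i, j) stands for v_{i+1, j+1} (0-based indices). *)
Definition HV (n : nat) : finType := option ('I_n * 'I_3)%type.

Definition Hedge (n : nat) (e : {set HV n}) : bool :=
  [exists i : 'I_n, e == [set (Some (i, j) : HV n) | j : 'I_3]]
  || [exists q : 'I_n, exists q1 : 'I_n, exists j : 'I_3, exists j' : 'I_3,
        [&& (q1 == q.+1 :> nat),
            (j' == (j + 1) %% 3 :> nat) || (j' == (j + 2) %% 3 :> nat) &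
            e == [set (Some (q1, j) : HV n); Some (q, j); Some (q, j')]]].

Definition ext_edge (n : nat) (e : {set HV n}) : bool :=
  [exists f : 'I_n, exists l : 'I_n, exists j : 'I_3, exists j' : 'I_3,
     [&& (f == 0 :> nat), (l == n.-1 :> nat), (j' == (j + 1) %% 3 :> nat) &
         e == [set (None : HV n); Some (f, j); Some (l, j')]]].

Definition Hext_edges (n : nat) : {set {set HV n}} :=
  [set e | Hedge e || ext_edge e].

(* An edge {x, y, z} of three distinct vertices is properly colored iff it sees
   exactly two colors (ncolors_triple).  The i-th row of H_n is the edge
   {v_{i,1}, v_{i,2}, v_{i,3}}.
   Uncolorability: a two-colored row looks like "color a on two columns and an
   accent b on the third column p" (two_colored_pat), and the step edges between
   consecutive rows force the next row to carry the same accent with a and b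
   swapped (pat_step).  So every proper coloring of the rows is alternating
   (rows_alternate); with an even number of rows the last row is the swap of the
   first, and the three added edges through v require v to avoid a, to avoid b,
   and to take one of a, b (Hext_uncolorable).
   Minimality: a proper subhypergraph must miss some edge e0, because every
   vertex lies on an edge (Hext_edges_cover); for each of the three kinds of e0
   an explicit row-by-row coloring of the remaining edges is given
   (colorable_minus_row, colorable_minus_step, colorable_minus_ext), verified
   edge kind by edge kind through rowcol_proper. *)

From mathcomp Require Import all_boot.
Set Implicit Arguments. Unset Strict Implicit. Unset Printing Implicit Defensive.

Definition two_colored (a b c : nat) : bool := size (undup [:: a; b; c]) == 2.

Lemma two_coloredE a b c :
  two_colored a b c = ((a == b) || (b == c) || (a == c)) && ~~ ((a == b) && (b == c)).
Proof.
rewrite /two_colored /= !inE.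
case: (eqVneq a b) => [<-|ab]; case: (eqVneq a c) => [<-|ac]; rewrite ?eqxx //=;
 case: (eqVneq b a) => //; case: (eqVneq b c) => //.
all: by move=> *; subst; rewrite eqxx in ab.
Qed.

Lemma ncolors_triple (T : finType) (f : T -> nat) x y z :
  x != y -> x != z -> y != z ->
  (1 < ncolors f [set x; y; z] < #|[set x; y; z]|) = two_colored (f x) (f y) (f z).
Proof.
move=> xy xz yz.
have exyz : perm_eq (enum [set x; y; z]) [:: x; y; z].
  apply: uniq_perm; first exact: enum_uniq.
    by rewrite /= !inE negb_or xy xz yz.
  by move=> u; rewrite mem_enum !inE ?orbA.
rewrite cardE (perm_size exyz) /ncolors /two_colored.
have -> : size (undup [seq f u | u <- enum [set x; y; z]]) = size (undup [:: f x; f y; f z]).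
  by apply/perm_size/perm_undup/perm_mem; exact: (perm_map f exyz).
by case: (size _) => [|[|[|[]]]].
Qed.

Lemma proper_coloring_sub (T : finType) (Es1 Es2 : {set {set T}}) f :
  Es1 \subset Es2 -> proper_coloring Es2 f -> proper_coloring Es1 f.
Proof. by move=> /subsetP sub pf e /sub; exact: pf. Qed.

Lemma two_colored_if a b (b1 b2 b3 : bool) : a != b ->
  two_colored (if b1 then b else a) (if b2 then b else a) (if b3 then b else a)
  = ~~ ((b1 == b2) && (b2 == b3)).
Proof.
move=> ab; rewrite two_coloredE.
by case: b1; case: b2; case: b3; rewrite ?eqxx //= ?(negbTE ab) ?(eq_sym b a) ?(negbTE ab).
Qed.

Lemma two_colored_xAA x a : two_colored x a a = (x != a).
Proof. by rewrite two_coloredE eqxx; case: (x == a). Qed.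
Lemma two_colored_AxA x a : two_colored a x a = (x != a).
Proof. by rewrite two_coloredE eqxx eq_sym; case: (x == a). Qed.
Lemma two_colored_AAx x a : two_colored a a x = (x != a).
Proof. by rewrite two_coloredE eqxx eq_sym; case: (x == a). Qed.
Lemma two_colored_xAB x a b : a != b -> two_colored x a b -> (x == a) || (x == b).
Proof.
rewrite two_coloredE => ab /andP [] /orP [/orP [-> //| ] | ->]; rewrite ?orbT //.
by rewrite (negbTE ab).
Qed.

Definition o0 : 'I_3 := @Ordinal 3 0 isT.
Definition o1 : 'I_3 := @Ordinal 3 1 isT.
Definition o2 : 'I_3 := @Ordinal 3 2 isT.

Lemma ord3P (x : 'I_3) : [\/ x = o0, x = o1 | x = o2].
Proof.
case: x => -[|[|[|//]]] lt3; [constructor 1 | constructor 2 | constructor 3];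
exact: val_inj.
Qed.

Ltac case3 x := case: (ord3P x) => ->.

Definition pat (p : 'I_3) (a b : nat) (x : 'I_3) : nat := if x == p then b else a.

Definition alt (a b : nat) (p : 'I_3) (r : nat) (x : 'I_3) : nat :=
  if (x == p) (+) odd r then b else a.

Lemma altE a b p r x : alt a b p r x = if odd r then pat p b a x else pat p a b x.
Proof. by rewrite /alt /pat; case: odd; case: eqP. Qed.

Lemma alt_row a b p r : a != b ->
  two_colored (alt a b p r o0) (alt a b p r o1) (alt a b p r o2).
Proof. by move=> ab; rewrite /alt two_colored_if //; case: (odd r); case3 p. Qed.

Lemma alt_step a b p r j j' : a != b -> j != j' ->
  two_colored (alt a b p r.+1 j) (alt a b p r j) (alt a b p r j').
Proof.
by move=> ab; rewrite /alt two_colored_if //=; case: (odd r); case3 p; case3 j; case3 j'.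
Qed.

Lemma odd_pred_even n : 0 < n -> ~~ odd n -> odd n.-1.
Proof. by move=> n0; rewrite -{1}(prednK n0) /= negbK. Qed.

(* The step edges of H_n join column j to the two other columns j + 1, j + 2. *)
Lemma neq_succ (j j' : 'I_3) :
  (j != j') = (val j' == (j + 1) %% 3) || (val j' == (j + 2) %% 3).
Proof. by case3 j; case3 j'. Qed.

Section Edges.
Variable n : nat.

Lemma row_edgeE (r : 'I_n) :
  [set (Some (r, j) : HV n) | j : 'I_3] = [set Some (r, o0); Some (r, o1); Some (r, o2)].
Proof.
apply/setP => u; rewrite !inE; apply/imsetP/idP.
  by case=> j _ ->; case3 j; rewrite eqxx ?orbT.
by case/orP => [/orP [] |] /eqP ->; eexists.
Qed.

Lemma row_edge_in (r : 'I_n) :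
  [set (Some (r, o0) : HV n); Some (r, o1); Some (r, o2)] \in Hext_edges n.
Proof.
by rewrite inE -row_edgeE; apply/orP; left; apply/orP; left; apply/existsP; exists r.
Qed.

Lemma step_edge_in (q q1 : 'I_n) (j j' : 'I_3) : q1 = q.+1 :> nat -> j != j' ->
  [set (Some (q1, j) : HV n); Some (q, j); Some (q, j')] \in Hext_edges n.
Proof.
move=> hq jj; rewrite inE; apply/orP; left; apply/orP; right.
apply/existsP; exists q; apply/existsP; exists q1; apply/existsP; exists j;
apply/existsP; exists j'.
by rewrite -neq_succ jj hq eqxx eqxx.
Qed.

Lemma ext_edge_in (f l : 'I_n) (j j' : 'I_3) :
  f = 0 :> nat -> l = n.-1 :> nat -> j' = (j + 1) %% 3 :> nat ->
  [set (None : HV n); Some (f, j); Some (l, j')] \in Hext_edges n.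
Proof.
move=> hf hl hj; rewrite inE; apply/orP; right.
apply/existsP; exists f; apply/existsP; exists l; apply/existsP; exists j;
apply/existsP; exists j'.
by rewrite hf hl hj !eqxx.
Qed.

Lemma Hext_edgesP (e : {set HV n}) : e \in Hext_edges n ->
  [\/ exists r : 'I_n, e = [set Some (r, o0); Some (r, o1); Some (r, o2)],
      exists (q q1 : 'I_n) (j j' : 'I_3),
        [/\ q1 = q.+1 :> nat, j != j' & e = [set Some (q1, j); Some (q, j); Some (q, j')]]
    | exists (f l : 'I_n) (j j' : 'I_3),
        [/\ f = 0 :> nat, l = n.-1 :> nat, j' = (j + 1) %% 3 :> nat &
             e = [set None; Some (f, j); Some (l, j')]]].
Proof.
rewrite inE => /orP [/orP [] | ].
- by case/existsP => r /eqP ->; constructor 1; exists r; rewrite row_edgeE.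
- case/existsP => q /existsP [q1 /existsP [j /existsP [j' /and3P [/eqP hq hj /eqP ->]]]].
  by constructor 2; exists q, q1, j, j'; rewrite neq_succ.
- case/existsP => f /existsP [l /existsP [j /existsP [j' ]]].
  case/and4P => /eqP hf /eqP hl /eqP hj /eqP ->.
  by constructor 3; exists f, l, j, j'.
Qed.

Lemma vertex_neq (r r' : 'I_n) (x x' : 'I_3) : (r != r') || (x != x') ->
  (Some (r, x) : HV n) != Some (r', x').
Proof. by case/orP => /eqP ne; apply/eqP => -[]. Qed.

Lemma succ_neq (q q1 : 'I_n) : q1 = q.+1 :> nat -> q1 != q.
Proof. by move=> hq; rewrite -(inj_eq val_inj) /= hq gtn_eqF. Qed.

Lemma ext_neq (j j' : 'I_3) : j' = (j + 1) %% 3 :> nat -> j != j'.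
Proof. by move=> hj; apply/eqP => ejj; move: hj; rewrite ejj; case3 j'. Qed.

Definition rowcol (g : nat -> 'I_3 -> nat) (w : nat) (u : HV n) : nat :=
  if u is Some (r, x) then g (val r) x else w.

Lemma rowcol_proper (g : nat -> 'I_3 -> nat) w (e0 : {set HV n}) :
  (forall r : 'I_n, [set (Some (r, j) : HV n) | j : 'I_3] != e0 ->
     two_colored (g r o0) (g r o1) (g r o2)) ->
  (forall (q q1 : 'I_n) (j j' : 'I_3), q1 = q.+1 :> nat -> j != j' ->
     [set (Some (q1, j) : HV n); Some (q, j); Some (q, j')] != e0 ->
     two_colored (g q1 j) (g q j) (g q j')) ->
  (forall (f l : 'I_n) (j j' : 'I_3), f = 0 :> nat -> l = n.-1 :> nat ->
     j' = (j + 1) %% 3 :> nat ->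
     [set (None : HV n); Some (f, j); Some (l, j')] != e0 ->
     two_colored w (g f j) (g l j')) ->
  proper_coloring (Hext_edges n :\ e0) (rowcol g w).
Proof.
move=> row step ext e; rewrite in_setD1 => /andP [ne0].
case/Hext_edgesP => [[r ee] | [q [q1 [j [j' [hq jj ee]]]]] | [f [l [j [j' [hf hl hj ee]]]]]].
- rewrite ee ncolors_triple; first (by apply: row; rewrite row_edgeE -ee);
    by apply/vertex_neq; rewrite orbC.
- rewrite ee ncolors_triple; first (by apply: step; rewrite -?ee);
    by apply/vertex_neq; rewrite ?(succ_neq hq) ?jj ?orbT.
- rewrite ee ncolors_triple //; first (by apply: ext; rewrite -?ee);
    by apply/vertex_neq; rewrite (ext_neq hj) orbT.
Qed.

Lemma proper_two_colored (f : HV n -> nat) Es x y z : proper_coloring Es f ->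
  [set x; y; z] \in Es -> x != y -> x != z -> y != z -> two_colored (f x) (f y) (f z).
Proof. by move=> pf he xy xz yz; rewrite -ncolors_triple //; apply: pf. Qed.

End Edges.

Lemma two_colored_pat (h : 'I_3 -> nat) : two_colored (h o0) (h o1) (h o2) ->
  exists p a b, a != b /\ forall x, h x = pat p a b x.
Proof.
rewrite two_coloredE.
case: (eqVneq (h o0) (h o1)) => e01; case: (eqVneq (h o1) (h o2)) => e12;
  case: (eqVneq (h o0) (h o2)) => e02 //= _.
- by move: e12; rewrite -e01 e02 eqxx.
- by exists o2, (h o0), (h o2); split => // x; rewrite /pat; case3 x.
- by move: e01; rewrite e02 -e12 eqxx.
- exists o0, (h o1), (h o0); split; first by rewrite eq_sym.
  by move=> x; rewrite /pat; case3 x; rewrite // -e12.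
- by exists o1, (h o0), (h o1); split => // x; rewrite /pat; case3 x.
Qed.

Lemma pat_step p a b (h h' : 'I_3 -> nat) : a != b -> (forall x, h x = pat p a b x) ->
  two_colored (h' o0) (h' o1) (h' o2) ->
  (forall j j', j != j' -> two_colored (h' j) (h j) (h j')) ->
  forall x, h' x = pat p b a x.
Proof.
move=> ab hp row step.
(* Off the accent, the step edge from x to the third column forces
   h' x <> a, and the step edge from x to p forces h' x to be a or b. *)
have off_p : forall x, x != p -> h' x = b.
  move=> x xp.
  have [y [yx yp]] : exists y, y != x /\ y != p.
    move: xp; case3 x; case3 p => // _;
    first [by exists o0 | by exists o1 | by exists o2].
  have := step x y; rewrite eq_sym yx !hp /pat (negbTE xp) (negbTE yp) two_colored_xAA.
  move=> /(_ isT) xa.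
  have := step x p xp; rewrite !hp /pat (negbTE xp) eqxx => /(two_colored_xAB ab).
  by rewrite (negbTE xa) => /eqP.
(* Row r+1 is two-colored, so its remaining column is not b ... *)
have at_p : h' p != b.
  move: row off_p; case3 p => row off_p.
  - by move: row; rewrite (off_p o1) // (off_p o2) // two_colored_xAA.
  - by move: row; rewrite (off_p o0) // (off_p o2) // two_colored_AxA.
  - by move: row; rewrite (off_p o0) // (off_p o1) // two_colored_AAx.
(* ... and the step edge from p to another column forces it to be a. *)
have [y yp] : exists y, y != p by case3 p; first [by exists o0 | by exists o1].
have := step p y; rewrite eq_sym yp !hp /pat eqxx (negbTE yp) => /(_ isT).
rewrite eq_sym in ab => /(two_colored_xAB ab); rewrite (negbTE at_p) /= => /eqP hpa.
by move=> x; rewrite /pat; case: eqP => [->|/eqP /off_p].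
Qed.

Lemma no_third_color w a b : a != b ->
  two_colored w a b -> two_colored w a a -> two_colored w b b -> False.
Proof.
rewrite !two_colored_xAA => ab /(two_colored_xAB ab) /orP [] /eqP ->;
by rewrite eqxx.
Qed.

Section Uncolorable.
Variables (n : nat) (f : HV n -> nat).
Hypothesis proper_f : proper_coloring (Hext_edges n) f.

Lemma rows_alternate : 0 < n ->
  exists p a b, a != b /\ forall (r : 'I_n) x, f (Some (r, x)) = alt a b p r x.
Proof.
move=> n0; pose row_of (r : 'I_n) (x : 'I_3) := f (Some (r, x)).
have row r : two_colored (row_of r o0) (row_of r o1) (row_of r o2).
  apply: (proper_two_colored proper_f (row_edge_in r));
  by apply/vertex_neq; rewrite orbC.
pose r0 : 'I_n := Ordinal n0.
have [p [a [b [ab hp]]]] := two_colored_pat (row r0).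
exists p, a, b; split => // r; move: {2}(val r) (erefl (val r)) => m.
elim: m r => [|m IH] r hr x.
  by rewrite altE hr /= -hp; congr (f (Some (_, x))); exact: val_inj.
have mr : m < n by apply: ltnW; rewrite -hr ltn_ord.
pose r' : 'I_n := Ordinal mr.
have step j j' : j != j' -> two_colored (row_of r j) (row_of r' j) (row_of r' j').
  move=> jj; apply: (proper_two_colored proper_f (@step_edge_in n r' r j j' hr jj));
  by apply/vertex_neq; rewrite ?(@succ_neq n r' r hr) ?jj ?orbT.
have prev y : row_of r' y = if odd m then pat p b a y else pat p a b y.
  by rewrite -altE; exact: IH.
move: prev; rewrite altE hr /=; case: (odd m) => /= prev.
- by apply: (pat_step _ prev (row r) step x); rewrite eq_sym.
- exact: (pat_step ab prev (row r) step x).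
Qed.

(* For n even, the first and last rows carry opposite patterns with the same
   accent p; then the added edges through columns p-1, p, p+1 of the first row
   leave no admissible color for the new vertex. *)
Lemma Hext_uncolorable : 0 < n -> ~~ odd n -> False.
Proof.
move=> n0 even_n; have [p [a [b [ab col]]]] := rows_alternate n0.
have nl : n.-1 < n by rewrite prednK.
pose r0 : 'I_n := Ordinal n0; pose rl : 'I_n := Ordinal nl.
have ext (j j' : 'I_3) : j' = (j + 1) %% 3 :> nat ->
    two_colored (f None) (pat p a b j) (pat p b a j').
  move=> hj; have := col r0 j; have := col rl j'.
  rewrite !altE /= (odd_pred_even n0 even_n) => <- <-.
  apply: (proper_two_colored proper_f (@ext_edge_in n r0 rl j j' erefl erefl hj)) => //.
  by apply/vertex_neq; rewrite (ext_neq hj) orbT.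
case: (ord3P p) ext => -> ext.
- exact: no_third_color ab (ext o1 o2 erefl) (ext o2 o0 erefl) (ext o0 o1 erefl).
- exact: no_third_color ab (ext o2 o0 erefl) (ext o0 o1 erefl) (ext o1 o2 erefl).
- exact: no_third_color ab (ext o0 o1 erefl) (ext o1 o2 erefl) (ext o2 o0 erefl).
Qed.

End Uncolorable.

Section Colorings.
Variable n : nat.
Hypotheses (n_gt1 : 1 < n) (even_n : ~~ odd n).

Lemma odd_last : odd n.-1.
Proof. exact: odd_pred_even (ltnW n_gt1) even_n. Qed.

(* Without the added edge {v, v_{1,j0}, v_{n,j0+1}}: alternate 0/1 with the
   accent at column j0 and give v the color 1. *)
Lemma colorable_minus_ext (f0 l0 : 'I_n) (j0 j0' : 'I_3) :
  f0 = 0 :> nat -> l0 = n.-1 :> nat -> j0' = (j0 + 1) %% 3 :> nat ->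
  exists g w, proper_coloring
    (Hext_edges n :\ [set None; Some (f0, j0); Some (l0, j0')]) (rowcol g w).
Proof.
move=> hf0 hl0 hj0; exists (alt 0 1 j0), 1; apply: rowcol_proper.
- by move=> r _; apply: alt_row.
- by move=> q q1 j j' hq jj _; rewrite hq; apply: alt_step.
- move=> f l j j' hf hl hj ne.
  have [ej|nj] := eqVneq j j0.
    have ef : f = f0 by apply: ord_inj; rewrite hf hf0.
    have el : l = l0 by apply: ord_inj; rewrite hl hl0.
    have ej' : j' = j0' by apply: ord_inj; rewrite hj hj0 ej.
    by rewrite ef el ej ej' eqxx in ne.
  rewrite hf hl /alt odd_last.
  by move/eqP: hj; move: nj; case3 j0; case3 j; case3 j'.
Qed.

(* Without row i: rows above i alternate 0/1 with the accent at column 0,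
   row i is monochromatic, rows below i alternate two colors (one of them
   new) with the accent at column 1, and v takes a color fitting the first
   and last rows. *)
Definition row_deleted_coloring (i r : nat) (x : 'I_3) : nat :=
  if r < i then alt 0 1 o0 r x else if r == i then nat_of_bool (odd i)
  else alt (if odd i then 0 else 2) (if odd i then 2 else 1) o1 r x.

Lemma colorable_minus_row (i : 'I_n) :
  exists g w, proper_coloring
    (Hext_edges n :\ [set (Some (i, j) : HV n) | j : 'I_3]) (rowcol g w).
Proof.
have cd : (if odd i then 0 else 2) != (if odd i then 2 else 1) by case: (odd i).
exists (row_deleted_coloring i).
exists (if i == 0 :> nat then nat_of_bool (odd i) else nat_of_bool (~~ odd i)).
apply: rowcol_proper; rewrite /row_deleted_coloring.
- move=> r ne; case: (ltngtP r i) => hr; try exact: alt_row.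
  by rewrite (ord_inj hr) eqxx in ne.
- move=> q q1 j j' hq jj _; rewrite hq.
  case: (ltngtP q.+1 i) => h1; first exact: alt_step.
  + case: eqP => [eq|_]; last exact: alt_step.
    by rewrite eq /alt /=; move: jj; case: (odd i); case3 j; case3 j'.
  + by rewrite -h1 /alt /=; move: jj; case: (odd q); case3 j; case3 j'.
- move=> f l j j' hf hl hj _; rewrite hf hl.
  have hil : i <= n.-1 by rewrite -ltnS (ltn_predK (ltn_ord i)).
  move/eqP: hj; case: (posnP i) => [i0|ip].
  + have nl : n.-1 != 0 by rewrite -lt0n -ltnS (ltn_predK n_gt1).
    rewrite i0 /= => hj; rewrite ifN_eq //; move: hj.
    by rewrite /alt odd_last /=; case3 j; case3 j'.
  + rewrite ltnNge hil /=.
    case: (ltngtP i n.-1) hil => // h3 _.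
    * by rewrite /alt odd_last /=; case: (odd i); case3 j; case3 j'.
    * by rewrite h3 odd_last /alt /=; case3 j; case3 j'.
Qed.

Definition third (a b : 'I_3) : 'I_3 :=
  if (a != o0) && (b != o0) then o0 else if (a != o1) && (b != o1) then o1 else o2.

(* Without the step edge {v_{q0+1,j0}, v_{q0,j0}, v_{q0,j0'}}: rows up to q0
   alternate with the accent at the third column, later rows alternate with
   the accent moved to j0 or j0' (shifting the parity when needed), and v
   takes the color 1 or 2. *)
Definition step_deleted_coloring (q0 : nat) (j0 j0' : 'I_3) (r : nat) (x : 'I_3) : nat :=
  let up := (val j0' == (j0 + 1) %% 3) in
  if r <= q0 then alt 0 1 (third j0 j0') r x
  else alt 0 1 (if up then j0 else j0') (r + ~~ up) x.

Lemma colorable_minus_step (q0 q1' : 'I_n) (j0 j0' : 'I_3) :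
  q1' = q0.+1 :> nat -> j0 != j0' ->
  exists g w, proper_coloring
    (Hext_edges n :\ [set Some (q1', j0); Some (q0, j0); Some (q0, j0')]) (rowcol g w).
Proof.
move=> hq0 hj0.
exists (step_deleted_coloring q0 j0 j0'), (if val j0' == (j0 + 1) %% 3 then 1 else 2).
apply: rowcol_proper; rewrite /step_deleted_coloring.
- by move=> r _; case: ifP => _; exact: alt_row.
- move=> q q1 j j' hq jj ne; rewrite hq.
  case: (ltngtP q q0) => h1; first exact: alt_step.
  + by rewrite addSn; exact: alt_step.
  + have nj : ~~ ((j == j0) && (j' == j0')).
      apply/negP => /andP [/eqP e1 /eqP e2]; move: ne.
      have eq : q = q0 by apply: ord_inj.
      have eq1 : q1 = q1' by apply: ord_inj; rewrite hq hq0 h1.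
      by rewrite eq eq1 e1 e2 eqxx.
    rewrite /alt oddS oddD.
    by move: nj jj hj0; case: (odd q); case3 j0; case3 j0'; case3 j; case3 j'.
- move=> f l j j' hf hl hj _; rewrite hf hl.
  have hl0 : q0 < n.-1 by rewrite -hq0 -ltnS (ltn_predK (ltn_ord q1')) ltn_ord.
  rewrite leq0n leqNgt hl0 /= /alt oddD odd_last.
  by move/eqP: hj hj0; case3 j0; case3 j0'; case3 j; case3 j'.
Qed.

Lemma colorable_minus_edge (e0 : {set HV n}) : e0 \in Hext_edges n ->
  exists f : HV n -> nat, proper_coloring (Hext_edges n :\ e0) f.
Proof.
case/Hext_edgesP => [[r ->] | [q [q1 [j [j' [hq jj ->]]]]] | [f [l [j [j' [hf hl hj ->]]]]]].
- by have [g [w pc]] := colorable_minus_row r; exists (rowcol g w); rewrite -row_edgeE.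
- by have [g [w pc]] := colorable_minus_step hq jj; exists (rowcol g w).
- by have [g [w pc]] := colorable_minus_ext hf hl hj; exists (rowcol g w).
Qed.

End Colorings.

(* Every vertex lies on an edge, so a bi-hypergraph with all the edges of
   H_n plus v uses all the vertices. *)
Lemma Hext_edges_cover n (Vs : {set HV n}) : 0 < n ->
  (forall e, e \in Hext_edges n -> e \subset Vs) -> Vs = setT.
Proof.
move=> n0 sub; apply/setP => -[[r x]|]; rewrite inE.
  apply: (subsetP (sub _ (row_edge_in r))).
  by rewrite !inE; case3 x; rewrite eqxx ?orbT.
have nl : n.-1 < n by rewrite prednK.
apply: (subsetP (sub _ (@ext_edge_in n (Ordinal n0) (Ordinal nl) o0 o1 erefl erefl erefl))).
by rewrite !inE eqxx.
Qed.

Theorem mainTheorem17 (k : nat) (hk : 1 <= k) :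
  minimal_uncolorable [set: HV (2 * k)] (Hext_edges (2 * k)).
Proof.
have n_gt1 : 1 < 2 * k by case: k hk => // m _; rewrite mulnS ltn_addr.
set n := 2 * k.
have even_n : ~~ odd n by rewrite /n oddM.
split; first by case=> f pf; exact: (Hext_uncolorable pf (ltnW n_gt1) even_n).
move=> Vs' Es' [edges_sub _] _ sub_Es ne.
(* Es' misses some edge e0, since with all edges Vs' would be everything. *)
have [_ [e0 e0_in e0_notin]] :
    Es' \subset Hext_edges n /\ exists2 e0, e0 \in Hext_edges n & e0 \notin Es'.
  apply/properP; rewrite properEneq sub_Es andbT; apply/eqP => eEs; apply: ne.
  by rewrite eEs in edges_sub *; rewrite (Hext_edges_cover (ltnW n_gt1) edges_sub).
have [f pf] := colorable_minus_edge n_gt1 even_n e0_in.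
by exists f; apply: proper_coloring_sub pf; rewrite subsetD1 sub_Es.
Qed.
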